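(* Let $E$ be a complex Banach lattice and let $A: E \supseteq D(A) \to E$ be a densely defined, closed, real linear operator. Let $u \in E_+$, let $\varphi \in E'_+$ be strictly positive, and assume $D(A)\subseteq E_u$ and $D(A')\subseteq (E')_\varphi$. Let $\mu_0$ be a real number in $\rho(A)$. (a) $R(\mu_0,A)\succeq -u\otimes\varphi$ if and only if $R(\mu,A)\succeq -u\otimes\varphi$ for all real $\mu\in\rho(A)$. (b) $R(\mu_0,A)\preceq u\otimes\varphi$ if and only if $R(\mu,A)\preceq u\otimes\varphi$ for all real $\mu\in\rho(A)$.
   Context: $E_{\mathbb{R}}$ denotes the real part of $E$. A linear operator $A$ is real if $D(A) = (D(A)\cap E_{\mathbb{R}}) + i(D(A)\cap E_{\mathbb{R}})$ and $A$ maps $D(A)\cap E_{\mathbb{R}}$ into $E_{\mathbb{R}}$. $R(\mu,A) = (\mu - A)^{-1}$. For bounded real operators, $T\succeq S$ (equivalently $S\preceq T$) means $T - cS$ maps $E_+$ into $E_+$ for some $c>0$. $u\otimes\varphi$ is $f\mapsto\langle\varphi,f\rangle u$. $\varphi$ strictly positive: $\langle\varphi,f\rangle>0$ for all $0\ne f\in E_+$. $E_u = \{x : |x|\le cu \text{ for some } c\ge0\}$; $(E')_\varphi = \{x'\in E' : |x'|\le c\varphi \text{ for some } c\ge 0\}$. *)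

From HB Require Import structures.
From mathcomp Require Import all_boot all_order all_algebra.
From mathcomp Require Import all_classical all_reals all_analysis.
Set Implicit Arguments. Unset Strict Implicit. Unset Printing Implicit Defensive.
Import Order.TTheory GRing.Theory Num.Theory.
Import numFieldNormedType.Exports.
Local Open Scope classical_set_scope.
Local Open Scope ring_scope.

Record banach_lattice (R : realType) (V : completeNormedModType R) : Type :=
  BanachLattice {
  bl_le : V -> V -> Prop;
  bl_sup : V -> V -> V;
  bl_refl : forall x, bl_le x x;
  bl_antisym : forall x y, bl_le x y -> bl_le y x -> x = y;
  bl_trans : forall x y z, bl_le x y -> bl_le y z -> bl_le x z;
  bl_add : forall x y z, bl_le x y -> bl_le (x + z) (y + z);
  bl_scale : forall (a : R) x y, 0 <= a -> bl_le x y -> bl_le (a *: x) (a *: y);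
  bl_sup_l : forall x y, bl_le x (bl_sup x y);
  bl_sup_r : forall x y, bl_le y (bl_sup x y);
  bl_sup_least : forall x y z, bl_le x z -> bl_le y z -> bl_le (bl_sup x y) z;
  bl_norm_mono : forall x y, bl_le (bl_sup x (- x)) (bl_sup y (- y)) ->
                   `|x| <= `|y| }.

Section Complexification.
Variables (R : realType) (V : completeNormedModType R) (L : banach_lattice V).

(* complex scalars are pairs (Re, Im) of reals *)
Definition cmul (a b : R * R) : R * R :=
  (a.1 * b.1 - a.2 * b.2, a.1 * b.2 + a.2 * b.1).

(* The complex Banach lattice E = E_R + i E_R, modelled as V * V
   (x, y) = x + i y.  Its topology is the product topology, which is the
   topology of the complexified lattice norm (the norms are equivalent). *)
Definition cE := (V * V)%type.

Definition cadd (z w : cE) : cE := (z.1 + w.1, z.2 + w.2).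
Definition cscale (a : R * R) (z : cE) : cE :=
  (a.1 *: z.1 - a.2 *: z.2, a.2 *: z.1 + a.1 *: z.2).
Definition csub (z w : cE) : cE := (z.1 - w.1, z.2 - w.2).

Definition E_real : set cE := [set z | z.2 = 0].
Definition E_pos : set cE := [set z | z.2 = 0 /\ bl_le L 0 z.1].

(* |z| <= w for z in E, w in E_R, with the modulus
   |x + i y| = sup_theta (cos theta x + sin theta y) *)
Definition cmod_le (z : cE) (w : V) : Prop :=
  forall theta : R, bl_le L (cos theta *: z.1 + sin theta *: z.2) w.

(* principal ideal E_u (u in E_+ given by its real part u : V) *)
Definition ideal_E (u : V) : set cE :=
  [set x | exists c : R, 0 <= c /\ cmod_le x (c *: u)].

Definition csubspace (D : set cE) : Prop :=
  D (0, 0) /\ (forall z w, D z -> D w -> D (cadd z w)) /\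
  (forall a z, D z -> D (cscale a z)).

Definition clinear_on (D : set cE) (A : cE -> cE) : Prop :=
  (forall z w, D z -> D w -> A (cadd z w) = cadd (A z) (A w)) /\
  (forall a z, D z -> A (cscale a z) = cscale a (A z)).

Definition densely_defined (D : set cE) : Prop := closure D = setT.

Definition closed_op (D : set cE) (A : cE -> cE) : Prop :=
  closed [set p : cE * cE | D p.1 /\ p.2 = A p.1].

Definition real_op (D : set cE) (A : cE -> cE) : Prop :=
  D = [set cadd p (cscale (0, 1) q) | p in D `&` E_real & q in D `&` E_real]
  /\ (forall z, D z -> E_real z -> E_real (A z)).

Definition dual_elt (phi : cE -> R * R) : Prop :=
  continuous phi /\
  (forall z w, phi (cadd z w) = (phi z + phi w)%R) /\
  (forall a z, phi (cscale a z) = cmul a (phi z)).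

Definition dual_pos (phi : cE -> R * R) : Prop :=
  dual_elt phi /\ (forall f, E_pos f -> (phi f).2 = 0 /\ 0 <= (phi f).1).

Definition strictly_pos (phi : cE -> R * R) : Prop :=
  forall f, E_pos f -> f <> (0, 0) -> (phi f).2 = 0 /\ 0 < (phi f).1.

Definition dual_dom (D : set cE) (A : cE -> cE) (x' : cE -> R * R) : Prop :=
  dual_elt x' /\
  exists y', dual_elt y' /\ forall x, D x -> x' (A x) = y' x.

(* (E')_phi : |x'| <= c phi, where for f in E_+
   |x'|(f) = sup { |x'(g)| : |g| <= f } *)
Definition ideal_dual (phi : cE -> R * R) (x' : cE -> R * R) : Prop :=
  dual_elt x' /\
  exists c : R, 0 <= c /\
    forall f : V, bl_le L 0 f -> forall g : cE, cmod_le g f ->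
      (x' g).1 ^+ 2 + (x' g).2 ^+ 2 <= (c * (phi (f, 0)).1) ^+ 2.

Definition is_resolvent (D : set cE) (A : cE -> cE) (mu : R * R)
  (B : cE -> cE) : Prop :=
  continuous B /\ clinear_on setT B /\
  (forall f, D (B f) /\ csub (cscale mu (B f)) (A (B f)) = f) /\
  (forall x, D x -> B (csub (cscale mu x) (A x)) = x).

Definition in_resolvent_set (D : set cE) (A : cE -> cE) (mu : R * R) : Prop :=
  exists B, is_resolvent D A mu B.

Definition op_succeq (T S : cE -> cE) : Prop :=
  exists c : R, 0 < c /\ forall f, E_pos f -> E_pos (csub (T f) (cscale (c, 0) (S f))).

Definition tensor (u : V) (phi : cE -> R * R) : cE -> cE :=
  fun f => cscale (phi f) (u, 0).

Definition neg_op (T : cE -> cE) : cE -> cE := fun f => cscale (-1, 0) (T f).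

End Complexification.

(* By the resolvent identity R(mu) - R(mu0) = (mu0 - mu) R(mu) R(mu0), both
   equivalences follow once R(mu) f - R(mu0) f lies in the order interval
   [-K phi(f) u, K phi(f) u] for every f >= 0: a bound -c u (x) phi <= R(mu0)
   (resp. R(mu0) <= c u (x) phi) then passes to R(mu) with c + K.  This comes
   from two uniform boundedness arguments.  R(mu) is continuous and maps E into
   D(A), which lies in E_u, so the Baire theorem gives |R(mu) g| <= K1 ||g|| u.
   R(mu0)' maps E' into D(A'), which lies in (E')_phi, so the set of the
   R(mu0) f / phi(f), f > 0, is weakly bounded, hence norm bounded; this yields
   ||R(mu0) f|| <= K2 phi(f).  Weakly bounded sets are bounded by a gliding hump
   argument on norming functionals, which Hahn-Banach provides. *)

From Pilot Require Import Defs.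
From HB Require Import structures.
From mathcomp Require Import all_boot all_order all_algebra.
From mathcomp Require Import all_classical all_reals all_analysis.
From mathcomp Require Import ring lra zify.
Import Pilot.Defs.
Import Order.TTheory GRing.Theory Num.Theory.
Import numFieldNormedType.Exports.
Local Open Scope classical_set_scope.
Local Open Scope ring_scope.
Set Implicit Arguments. Unset Strict Implicit. Unset Printing Implicit Defensive.

Section BanachLatticeOrder.
Variables (R : realType) (V : completeNormedModType R) (L : banach_lattice V).
Local Notation le := (bl_le L).
Local Notation sup := (bl_sup L).

Lemma bl_addl x y z : le x y -> le (z + x) (z + y).
Proof. by move=> h; rewrite ![z + _]addrC; apply: bl_add. Qed.

Lemma bl_add2 x y z w : le x y -> le z w -> le (x + z) (y + w).
Proof. by move=> h1 h2; apply: (bl_trans (bl_add z h1)); apply: bl_addl. Qed.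

Lemma bl_subr_ge0 x y : le 0 (y - x) <-> le x y.
Proof.
split=> h; first by have := bl_add x h; rewrite add0r subrK.
by have := bl_add (- x) h; rewrite subrr.
Qed.

Lemma bl_subr_le0 x y : le (x - y) 0 <-> le x y.
Proof.
split=> h; first by have := bl_add y h; rewrite add0r subrK.
by have := bl_add (- y) h; rewrite subrr.
Qed.

Lemma bl_addr_ge0 x y : le 0 (x + y) <-> le (- y) x.
Proof. by have := bl_subr_ge0 (- y) x; rewrite opprK. Qed.

Lemma bl_scale_leP (c : R) x y : 0 < c -> le (c *: x) y <-> le x (c^-1 *: y).
Proof.
move=> c0; have ci : 0 <= c^-1 by rewrite invr_ge0 ltW.
split=> h; first by have := bl_scale ci h; rewrite scalerA mulVf ?gt_eqF ?scale1r.
by have := bl_scale (ltW c0) h; rewrite scalerA mulfV ?gt_eqF ?scale1r.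
Qed.

Lemma bl_leN2 x y : le x y -> le (- y) (- x).
Proof.
move=> h; have := bl_add (- x - y) h.
by rewrite addrA subrr add0r addrCA subrr addr0.
Qed.

Lemma bl_scaler_wle u (a b : R) : le 0 u -> a <= b -> le (a *: u) (b *: u).
Proof.
move=> u0 ab; apply/bl_subr_ge0; rewrite -scalerBl.
by have := bl_scale (x := 0) (y := u) (a := b - a); rewrite scaler0; apply; rewrite ?subr_ge0.
Qed.

Definition bl_abs z := sup z (- z).

Lemma bl_abs_ge0 z : le 0 (bl_abs z).
Proof.
have h := bl_add2 (bl_sup_l L z (- z)) (bl_sup_r L z (- z)).
rewrite subrr -/(bl_abs z) -mulr2n -scaler_nat in h.
have := bl_scale (a := 2^-1) (ltW _) h; rewrite scaler0 scalerA.
by rewrite mulVf ?scale1r ?pnatr_eq0 //; apply; rewrite invr_gt0 ltr0n.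
Qed.

Lemma bl_absN z : bl_abs (- z) = bl_abs z.
Proof.
rewrite /bl_abs opprK; apply: bl_antisym; apply: bl_sup_least;
  by [apply: bl_sup_r | apply: bl_sup_l].
Qed.

Definition bl_pos x := sup x 0.

Lemma bl_pos_le x y : le (bl_pos x) (bl_pos y + bl_abs (x - y)).
Proof.
apply: bl_sup_least.
  have h := bl_add2 (bl_sup_l L y 0) (bl_sup_l L (x - y) (- (x - y))).
  by rewrite addrC subrK in h.
by have h := bl_add2 (bl_sup_r L y 0) (bl_abs_ge0 (x - y)); rewrite addr0 in h.
Qed.

Lemma bl_pos_lipschitz x y : `|bl_pos x - bl_pos y| <= `|x - y|.
Proof.
apply: bl_norm_mono; apply: bl_sup_least.
  by have := bl_add (- bl_pos y) (bl_pos_le x y); rewrite [bl_pos y + _]addrC addrK; apply.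
have := bl_add (- bl_pos x) (bl_pos_le y x).
by rewrite [bl_pos x + _]addrC addrK -bl_absN opprB opprB; apply.
Qed.

Lemma bl_pos_continuous : continuous bl_pos.
Proof.
move=> x; apply/cvgrPdist_lt => e e0; near=> y.
by apply: le_lt_trans (bl_pos_lipschitz x y) _; near: y; apply: cvgr_dist_lt.
Unshelve. all: by end_near.
Qed.

Lemma closed_bl_le0 (T : topologicalType) (g : T -> V) :
  continuous g -> closed [set t | le (g t) 0].
Proof.
move=> cg.
have -> : [set t | le (g t) 0] = (bl_pos \o g) @^-1` [set 0].
  apply/seteqP; split => t /=; last by move=> <-; apply: bl_sup_l.
  by move=> h; apply: bl_antisym; [apply: bl_sup_least (bl_refl _ _) | apply: bl_sup_r].
apply: (continuous_closedP _).1.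
  by move=> t; apply: continuous_comp; [apply: cg | apply: bl_pos_continuous].
exact/accessible_closed_set1/hausdorff_accessible/norm_hausdorff.
Qed.

Lemma closed_bl_le (T : topologicalType) (g : T -> V) w :
  continuous g -> closed [set t | le (g t) w].
Proof.
move=> cg; have -> : [set t | le (g t) w] = [set t | le (g t - w) 0].
  by apply/seteqP; split => t /= /bl_subr_le0.
by apply: closed_bl_le0 => t; apply: cvgB; [apply: cg | apply: cvg_cst].
Qed.

Lemma closed_bl_ge (T : topologicalType) (g : T -> V) w :
  continuous g -> closed [set t | le w (g t)].
Proof.
move=> cg; have -> : [set t | le w (g t)] = [set t | le (w - g t) 0].
  by apply/seteqP; split => t /= /bl_subr_le0.
by apply: closed_bl_le0 => t; apply: cvgB; [apply: cvg_cst | apply: cg].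
Qed.

Definition order_bounded u (c : R) x := le (- (c *: u)) x /\ le x (c *: u).

Lemma order_bounded0 u : order_bounded u 0 0.
Proof. by rewrite /order_bounded scale0r oppr0; split; apply: bl_refl. Qed.

Lemma order_bounded_widen u c c' x :
  le 0 u -> c <= c' -> order_bounded u c x -> order_bounded u c' x.
Proof.
move=> u0 cc' [h1 h2]; split; last exact: bl_trans h2 (bl_scaler_wle u0 cc').
by apply: bl_trans h1; apply/bl_leN2/bl_scaler_wle.
Qed.

Lemma order_boundedZ u c x (r : R) :
  order_bounded u c x -> order_bounded u (`|r| * c) (r *: x).
Proof.
rewrite /order_bounded => -[h1 h2]; have [r0|r0] := leP 0 r.
  by rewrite ger0_norm // -!scalerA -scalerN; split; apply: bl_scale.
have -> : r *: x = (- r) *: (- x) by rewrite scalerN scaleNr opprK.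
have r0' : 0 <= - r by rewrite oppr_ge0 ltW.
rewrite ltr0_norm // -!scalerA -scalerN; split; apply: bl_scale => //.
  exact: bl_leN2.
by rewrite -[c *: u]opprK; apply: bl_leN2.
Qed.

Lemma order_boundedB u c c' x y :
  order_bounded u c x -> order_bounded u c' y -> order_bounded u (c + c') (x - y).
Proof.
move=> [h1 h2] [h3 h4]; rewrite /order_bounded scalerDl; split.
  by rewrite opprD; apply: bl_add2 h1 _; apply: bl_leN2.
by apply: bl_add2 h2 _; rewrite -[c' *: u]opprK; apply: bl_leN2.
Qed.

Lemma order_bounded_lower u a b y y0 :
  le (- (a *: u)) y0 -> order_bounded u b (y - y0) -> le (- ((a + b) *: u)) y.
Proof.
by move=> h [hb _]; rewrite scalerDl opprD; have := bl_add2 h hb; rewrite subrKC.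
Qed.

Lemma order_bounded_upper u a b y y0 :
  le y0 (a *: u) -> order_bounded u b (y - y0) -> le y ((a + b) *: u).
Proof. by move=> h [_ hb]; rewrite scalerDl; have := bl_add2 h hb; rewrite subrKC. Qed.

Lemma closed_order_bounded (T : topologicalType) (g : T -> V) u c :
  continuous g -> closed [set t | order_bounded u c (g t)].
Proof. by move=> cg; apply: closedI; [apply: closed_bl_ge | apply: closed_bl_le]. Qed.
End BanachLatticeOrder.

Section OrderBoundedOperator.
Variables (R : realType) (W V : completeNormedModType R) (L : banach_lattice V).
Variables (b : W -> V) (u : V).
Hypothesis bD : forall x y, b (x + y) = b x + b y.
Hypothesis bZ : forall (a : R) x, b (a *: x) = a *: b x.
Hypothesis b_cont : continuous b.
Hypothesis u_ge0 : bl_le L 0 u.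
Hypothesis b_order_bounded : forall x, exists c : R, order_bounded L u c (b x).

Lemma order_bounded_on_ball :
  exists x0 r (n : nat), 0 < r /\ forall z, ball x0 r z -> order_bounded L u n%:R (b z).
Proof.
pose C (n : nat) := [set x | order_bounded L u n%:R (b x)].
have C_cover x : exists n, C n x.
  have [c hc] := b_order_bounded x; exists (Num.trunc c).+1.
  exact: order_bounded_widen u_ge0 (ltW (truncnS_gt c)) hc.
have [n Cn] : exists n, ~ dense (~` C n).
  apply: contrapT => all_dense.
  have dC i : open (~` C i) /\ dense (~` C i).
    split; first by rewrite openC; apply: closed_order_bounded.
    by apply: contrapT => hi; apply: all_dense; exists i.
  have /(_ setT) [] := Baire dC; [by exists 0 | exact: openT |].
  by move=> x [_ /(_ _ I) hx]; have [i Ci] := C_cover x; apply: hx Ci.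
have [U [[x0 /open_nbhs_nbhs /nbhs_ballP [r r0 bxr]] UC]] := denseNE Cn.
exists x0, r, n; split => // z /bxr Uz; apply: contrapT => nCz.
by have : (U `&` ~` C n) z by []; rewrite UC.
Qed.

Lemma order_bounded_linear : exists K : R, 0 <= K /\ forall x, order_bounded L u (K * `|x|) (b x).
Proof.
have [x0 [r [n [r0 hball]]]] := order_bounded_on_ball.
have small y : `|y| < r -> order_bounded L u (n%:R + n%:R) (b y).
  move=> yr; have -> : b y = b (x0 + y) - b x0 by rewrite bD addrC addKr.
  apply: order_boundedB; apply: hball; last exact: ballxx.
  by rewrite -ball_normE /ball_ /= opprD addrA subrr add0r normrN.
exists (4 * n%:R / r); split; first by rewrite divr_ge0 ?mulr_ge0 // ltW.
move=> x; have [->|xn0] := eqVneq x 0.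
  have := bZ 0 0; rewrite !scale0r => ->; rewrite normr0 mulr0; exact: order_bounded0.
have nx : 0 < `|x| by rewrite normr_gt0.
pose t := r / (2 * `|x|).
have t0 : 0 < t by rewrite divr_gt0 // mulr_gt0.
have tx : `|t *: x| < r.
  rewrite normrZ gtr0_norm // /t -mulrA invfM -mulrA mulVf ?mulr1 ?gt_eqF //.
  by rewrite ltr_pdivrMr // ltr_pMr // ltr1n.
have -> : b x = t^-1 *: b (t *: x) by rewrite bZ scalerA mulVf ?scale1r // gt_eqF.
have -> : 4 * n%:R / r * `|x| = `|t^-1| * (n%:R + n%:R).
  by rewrite gtr0_norm ?invr_gt0 // /t invf_div; field; rewrite gt_eqF.
exact/order_boundedZ/small.
Qed.
End OrderBoundedOperator.

Section NormingFunctional.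
Variables (R : realType) (V : normedModType R).

Definition linear_functional (psi : V -> R) :=
  (forall x y, psi (x + y) = psi x + psi y) /\ (forall (c : R) x, psi (c *: x) = c * psi x).

Lemma linear_functionalB psi x y : linear_functional psi -> psi (x - y) = psi x - psi y.
Proof. by case=> pD pZ; rewrite pD -scaleN1r pZ mulN1r. Qed.

Definition dominated_graph (G : set (V * R)) :=
  [/\ forall x a b, G (x, a) -> G (x, b) -> a = b,
      forall x y a b c, G (x, a) -> G (y, b) -> G (c *: x + y, c * a + b),
      forall x a, G (x, a) -> a <= `|x| & G (0, 0)].

Definition norm_line (z : V) := [set p : V * R | exists c : R, p = (c *: z, c * `|z|)].

Lemma dominated_graph_line z : dominated_graph (norm_line z).
Proof.
split.
- move=> x a b [c [-> ->]] [d [xd ->]].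
  have : `|(c - d) *: z| = 0 by rewrite scalerBl xd subrr normr0.
  rewrite normrZ => /eqP; rewrite mulf_eq0 normr_eq0 subr_eq0 => /orP[/eqP->//|/eqP->].
  by rewrite !mulr0.
- move=> x y a b c [d [-> ->]] [e [-> ->]]; exists (c * d + e).
  by rewrite scalerDl scalerA mulrDl mulrA.
- by move=> x a [c [-> ->]]; rewrite normrZ ler_wpM2r // ler_norm.
- by exists 0; rewrite scale0r mul0r.
Qed.

Lemma dominated_graphZ M y a (c : R) : dominated_graph M -> M (y, a) -> M (c *: y, c * a).
Proof. by case=> _ Ml _ M0 Mya; have := Ml _ _ _ _ c Mya M0; rewrite !addr0. Qed.

Lemma dominated_graphD M y a y' b :
  dominated_graph M -> M (y, a) -> M (y', b) -> M (y + y', a + b).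
Proof. by case=> _ Ml _ _ h1 h2; have := Ml _ _ _ _ 1 h1 h2; rewrite scale1r mul1r. Qed.

Lemma dominated_graph_chain z (F : set (set (V * R))) :
  (forall X, F X -> dominated_graph (X `|` norm_line z)) -> total_on F subset ->
  dominated_graph ((\bigcup_(X in F) X) `|` norm_line z).
Proof.
move=> FQ tot; set U := _ `|` _.
have common p q : U p -> U q ->
    exists Y, [/\ dominated_graph Y, Y `<=` U, Y p & Y q].
  have sub X : F X -> X `|` norm_line z `<=` U.
    by move=> FX w [Xw|Gw]; [left; exists X | right].
  case=> [[X FX Xp]|Gp] [[Y FY Yq]|Gq].
  - have [XY|YX] := tot X Y FX FY.
      by exists (Y `|` norm_line z); split; [exact: FQ|exact: sub|left; exact: XY|left].
    by exists (X `|` norm_line z); split; [exact: FQ|exact: sub|left|left; exact: YX].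
  - by exists (X `|` norm_line z); split; [exact: FQ|exact: sub|left|right].
  - by exists (Y `|` norm_line z); split; [exact: FQ|exact: sub|right|left].
  - exists (norm_line z); split=> //; first exact: dominated_graph_line.
    by move=> w; right.
split.
- by move=> x a b Ua Ub; have [Y [[f _ _ _] _ Ya Yb]] := common _ _ Ua Ub; apply: f Ya Yb.
- move=> x y a b c Ua Ub; have [Y [[_ l _ _] YU Ya Yb]] := common _ _ Ua Ub.
  exact/YU/l.
- by move=> x a Ua; have [Y [[_ _ d _] _ Ya _]] := common _ _ Ua Ua; apply: d Ya.
- by right; case: (dominated_graph_line z).
Qed.

Definition graph_extend (M : set (V * R)) (x1 : V) (t : R) :=
  [set p | exists y a c, M (y, a) /\ p = (y + c *: x1, a + c * t)].

Lemma graph_extend_le_norm M x1 t : dominated_graph M ->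
  (forall y a, M (y, a) -> a - `|y - x1| <= t) -> (forall y a, M (y, a) -> t <= `|y + x1| - a) ->
  forall x a, graph_extend M x1 t (x, a) -> a <= `|x|.
Proof.
move=> MQ below above x a [y [a0 [c [My [-> ->]]]]]; have [_ _ Md _] := MQ.
case: (ltgtP c 0) => [cneg|cpos|->]; last by rewrite scale0r mul0r !addr0; apply: Md My.
  have d0 : 0 < - c by rewrite oppr_gt0.
  have := below _ _ (dominated_graphZ ((- c)^-1) MQ My).
  have -> : (- c)^-1 *: y - x1 = (- c)^-1 *: (y + c *: x1).
    by rewrite scalerDr scalerA invrN mulNr mulVf ?lt_eqF // scaleN1r.
  rewrite normrZ gtr0_norm ?invr_gt0 // -mulrBr => h.
  by have := ler_wpM2l (ltW d0) h; rewrite mulrA mulfV ?oppr_eq0 ?lt_eqF // mul1r; lra.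
have := above _ _ (dominated_graphZ (c^-1) MQ My).
have -> : c^-1 *: y + x1 = c^-1 *: (y + c *: x1).
  by rewrite scalerDr scalerA mulVf ?scale1r // gt_eqF.
rewrite normrZ gtr0_norm ?invr_gt0 // -mulrBr => h.
by have := ler_wpM2l (ltW cpos) h; rewrite mulrA mulfV ?gt_eqF // mul1r; lra.
Qed.

Lemma dominated_graph_extend M x1 :
  dominated_graph M -> ~ (exists a, M (x1, a)) ->
  exists t, dominated_graph (graph_extend M x1 t).
Proof.
move=> MQ nx1; have [Mf Ml Md M0] := MQ.
pose lo := [set l | exists y a, M (y, a) /\ l = a - `|y - x1|].
have ub y' a' : M (y', a') -> ubound lo (`|y' + x1| - a').
  move=> My' _ [y [a [My ->]]]; rewrite lerBrDr addrAC lerBlDr.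
  apply: le_trans (Md _ _ (dominated_graphD MQ My My')) _.
  have -> : y + y' = (y - x1) + (y' + x1) by rewrite addrACA addNr addr0.
  by rewrite addrC ler_normD.
have lo_sup : has_sup lo.
  by split; [exists (0 - `|0 - x1|), 0, 0 | exists (`|0 + x1| - 0); apply: ub].
exists (sup lo); split.
- move=> x a b [y [a0 [c [My [-> ->]]]]] [y' [a0' [c' [My' []]]]] e ->.
  have [cc|cc] := eqVneq c c'.
    by rewrite -cc in e My' *; move/addIr: e My' => <- My'; rewrite (Mf _ _ _ My My').
  exfalso; apply: nx1.
  have := dominated_graphZ ((c' - c)^-1) MQ (dominated_graphD MQ My (dominated_graphZ (-1) MQ My')).
  have -> : y + -1 *: y' = (c' - c) *: x1.
    rewrite scaleN1r; apply/eqP; rewrite subr_eq; apply/eqP.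
    by apply: (addIr (c *: x1)); rewrite e scalerBl addrAC subrK addrC.
  rewrite scalerA mulVf ?scale1r; first by move=> h; eexists; apply: h.
  by rewrite subr_eq0 eq_sym.
- move=> x y a b k [y1 [a1 [c1 [M1 [-> ->]]]]] [y2 [a2 [c2 [M2 [-> ->]]]]].
  exists (k *: y1 + y2), (k * a1 + a2), (k * c1 + c2); split; first exact: Ml.
  congr (_, _); first by rewrite scalerDr scalerA scalerDl addrACA.
  by rewrite mulrDr mulrA mulrDl addrACA.
- apply: graph_extend_le_norm => // y a My.
    by apply: sup_upper_bound => //; exists y, a.
  by apply: ge_sup => //; [case: lo_sup | apply: ub].
- by exists 0, 0, 0; split => //; rewrite scale0r addr0 mul0r addr0.
Qed.

(* Zorn is applied to the graphs G such that G `|` norm_line z is dominated: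
   adding the line keeps the empty chain admissible and makes the maximal
   functional norm z. *)
Lemma norming_functional (z : V) : exists psi : V -> R,
  [/\ linear_functional psi, forall x, `|psi x| <= `|x| & psi z = `|z|].
Proof.
have [A [PA Amax]] := @Zorn_bigcup (V * R)
  (fun G => dominated_graph (G `|` norm_line z)) (fun F FP tot => dominated_graph_chain FP tot).
set M := A `|` norm_line z.
have [Mf Ml Md M0] : dominated_graph M := PA.
have total x : exists a, M (x, a).
  apply: contrapT => nx; have [t Bt] := dominated_graph_extend PA nx.
  set B := graph_extend M x t.
  have MB : M `<=` B.
    by case=> y a My; exists y, a, 0; rewrite scale0r addr0 mul0r addr0.
  apply: (Amax B); last first.
    have -> : B `|` norm_line z = B.
      by apply/seteqP; split => p; [case=> // Gp; apply: MB; right | left].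
    exact: Bt.
  split; first by move=> p Ap; apply: MB; left.
  move=> BA; apply: nx; exists t; left; apply: BA.
  by exists 0, 0, 1; split; [case: PA | rewrite add0r scale1r add0r mul1r].
have [psi hpsi] := choice total.
have pZ (c : R) x : psi (c *: x) = c * psi x.
  by apply: (Mf (c *: x)) (hpsi _) _; have := Ml _ _ _ _ c (hpsi x) M0; rewrite !addr0.
exists psi; split.
- split=> // x y; apply: (Mf (x + y)) (hpsi _) _.
  by have := Ml _ _ _ _ 1 (hpsi x) (hpsi y); rewrite scale1r mul1r.
- move=> x; rewrite ler_norml (Md _ _ (hpsi x)) andbT lerNl.
  by have := Md _ _ (hpsi (-1 *: x)); rewrite pZ scaleN1r normrN mulN1r.
- by apply: (Mf z) (hpsi _) _; right; exists 1; rewrite scale1r mul1r.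
Qed.
End NormingFunctional.

Section GlidingHump.
Variables (R : realType) (V : normedModType R).

Definition hump_weight (n : nat) : R := 3^-1 ^+ n.

Lemma hump_weight_gt0 n : 0 < hump_weight n.
Proof. by rewrite exprn_gt0 // invr_gt0. Qed.

Lemma hump_weightS n : hump_weight n.+1 = hump_weight n / 3.
Proof. by rewrite /hump_weight exprSr. Qed.

Lemma hump_weight_small n : n.+1%:R * hump_weight n <= 1.
Proof.
elim: n => [|n IH]; first by rewrite /hump_weight expr0 mulr1.
rewrite hump_weightS mulrA; apply: le_trans IH; have w0 := hump_weight_gt0 n.
rewrite mulrAC; apply: ler_wpM2r; first exact: ltW.
by rewrite ler_pdivrMr // -natrM ler_nat; lia.
Qed.

Lemma eq0_le_hump_weight (d C : R) : (forall n, `|d| <= hump_weight n * C) -> d = 0.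
Proof.
move=> h; apply/eqP; apply: contraT => dn; have d0 : 0 < `|d| by rewrite normr_gt0.
have := h 0%N; rewrite /hump_weight expr0 mul1r => dC.
pose n := Num.trunc (C / `|d|).
have h1 : C < n.+1%:R * `|d| by rewrite -ltr_pdivrMr // truncnS_gt.
have h2 : n.+1%:R * `|d| <= n.+1%:R * hump_weight n * C by rewrite -mulrA ler_wpM2l.
have h3 : n.+1%:R * hump_weight n * C <= C.
  by rewrite -[leRHS]mul1r ler_wpM2r ?hump_weight_small // (le_trans (ltW d0)).
by have := lt_le_trans h1 (le_trans h2 h3); rewrite ltxx.
Qed.

Variables (s : nat -> V) (ps : nat -> V -> R).
Hypothesis ps_linear : forall n, linear_functional (ps n).
Hypothesis ps_bounded : forall n x, `|ps n x| <= `|x|.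

(* The sign of the n-th hump is chosen so that adding it pushes the value at
   s n away from 0. *)
Fixpoint hump (n : nat) : V -> R :=
  if n is m.+1 then fun x =>
    hump m x + (if 0 <= hump m (s m) then hump_weight m else - hump_weight m) * ps m x
  else fun _ => 0.

Lemma hump_linear n : linear_functional (hump n).
Proof.
elim: n => [|n [IHD IHZ]] /=; first by split=> *; rewrite ?addr0 ?mulr0.
have [pD pZ] := ps_linear n.
split=> [x y|c x]; first by rewrite IHD pD mulrDr addrACA.
by rewrite IHZ pZ mulrDr mulrCA.
Qed.

Lemma hump_cauchy n k x :
  `|hump (n + k) x - hump n x| <= 3 / 2 * (hump_weight n - hump_weight (n + k)) * `|x|.
Proof.
elim: k => [|k IH]; first by rewrite addn0 !subrr normr0 mulr0 mul0r.
rewrite addnS /=; set c := (if _ then _ else _).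
have hc : `|c * ps (n + k) x| <= hump_weight (n + k) * `|x|.
  have w0 := hump_weight_gt0 (n + k).
  rewrite normrM; have -> : `|c| = hump_weight (n + k).
    by rewrite /c; case: ifP => _; rewrite ?normrN gtr0_norm.
  by apply: ler_wpM2l; [apply: ltW | apply: ps_bounded].
rewrite addrAC; apply: le_trans (ler_normD _ _) _.
have -> : 3 / 2 * (hump_weight n - hump_weight (n + k).+1) * `|x| =
  3 / 2 * (hump_weight n - hump_weight (n + k)) * `|x| + hump_weight (n + k) * `|x|.
  by rewrite hump_weightS; field.
exact: lerD.
Qed.

Lemma hump_bound n m x :
  hump m x - 3 / 2 * hump_weight m * `|x| <= hump n x + 3 / 2 * hump_weight n * `|x|.
Proof.
have x0 := normr_ge0 x; have wn := hump_weight_gt0 n; have wm := hump_weight_gt0 m.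
have [wmx wnx] : 0 <= hump_weight m * `|x| /\ 0 <= hump_weight n * `|x|.
  by split; apply: mulr_ge0 => //; apply: ltW.
have [nm|mn] := leqP n m.
  have := hump_cauchy n (m - n) x; rewrite subnKC // ler_norml => /andP[_].
  by rewrite !mulrBr !mulrBl; lra.
have := hump_cauchy m (n - m) x; rewrite subnKC ?(ltnW mn) // ler_norml => /andP[h _].
by move: h; rewrite !mulrBr !mulrBl; lra.
Qed.

Lemma hump_limit x : exists r : R, forall n, `|r - hump n x| <= 3 / 2 * hump_weight n * `|x|.
Proof.
pose lo := [set l | exists m, l = hump m x - 3 / 2 * hump_weight m * `|x|].
have ub n : ubound lo (hump n x + 3 / 2 * hump_weight n * `|x|).
  by move=> _ [m ->]; apply: hump_bound.
have lo_sup : has_sup lo by split; [eexists; exists 0%N | eexists; apply: (ub 0%N)].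
exists (sup lo) => n; rewrite ler_norml.
have := sup_upper_bound lo_sup (ex_intro _ n erefl).
by have := ge_sup (proj1 lo_sup) (ub n); lra.
Qed.

Lemma hump_at_large k : ps k (s k) = `|s k| -> hump_weight k * `|s k| <= `|hump k.+1 (s k)|.
Proof.
move=> psk; rewrite [hump k.+1 _]/= psk ler_normr.
have : 0 <= hump_weight k * `|s k| by rewrite mulr_ge0 // ltW // hump_weight_gt0.
by case: ifP => [|/negbT]; rewrite -?ltNge ?mulNr => p0 w0; apply/orP; [left | right]; lra.
Qed.

Lemma hump_approx_linear psi :
  (forall n x, `|psi x - hump n x| <= 3 / 2 * hump_weight n * `|x|) -> linear_functional psi.
Proof.
move=> psiP; split=> [x y|c x]; apply/eqP; rewrite -subr_eq0; apply/eqP.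
  apply: (@eq0_le_hump_weight _ (3 / 2 * (`|x + y| + `|x| + `|y|))) => n.
  have e1 := psiP n (x + y); have e2 := psiP n x; have e3 := psiP n y.
  rewrite (hump_linear n).1 in e1.
  have -> : psi (x + y) - (psi x + psi y) = (psi (x + y) - (hump n x + hump n y))
    - (psi x - hump n x) - (psi y - hump n y) by ring.
  apply: le_trans (ler_normB _ _) _; apply: le_trans (lerD (ler_normB _ _) (lexx _)) _.
  have -> : hump_weight n * (3 / 2 * (`|x + y| + `|x| + `|y|)) =
    3 / 2 * hump_weight n * `|x + y| + 3 / 2 * hump_weight n * `|x|
    + 3 / 2 * hump_weight n * `|y| by ring.
  by apply: lerD; [apply: lerD|].
apply: (@eq0_le_hump_weight _ (3 / 2 * (`|c *: x| + `|c| * `|x|))) => n.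
have e1 := psiP n (c *: x); have e2 := psiP n x; rewrite (hump_linear n).2 in e1.
have -> : psi (c *: x) - c * psi x =
  (psi (c *: x) - c * hump n x) - c * (psi x - hump n x) by ring.
apply: le_trans (ler_normB _ _) _; rewrite normrM.
have -> : hump_weight n * (3 / 2 * (`|c *: x| + `|c| * `|x|)) =
  3 / 2 * hump_weight n * `|c *: x| + `|c| * (3 / 2 * hump_weight n * `|x|) by ring.
by apply: lerD => //; apply: ler_wpM2l.
Qed.

Lemma hump_limit_functional : exists psi : V -> R,
  [/\ linear_functional psi, forall x, `|psi x| <= 2 * `|x|
    & forall n x, `|psi x - hump n x| <= 3 / 2 * hump_weight n * `|x|].
Proof.
have [psi psiP] := choice hump_limit.
have approx n x : `|psi x - hump n x| <= 3 / 2 * hump_weight n * `|x| by apply: psiP.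
exists psi; split=> //; first exact: hump_approx_linear.
move=> x; have := approx 0%N x; rewrite /= subr0 /hump_weight expr0 mulr1 => h.
by apply: le_trans h _; apply: ler_wpM2r => //; rewrite ler_pdivrMr // -natrM ler_nat.
Qed.
End GlidingHump.

Lemma weakly_bounded_bounded (R : realType) (V : normedModType R) (S : set V) :
  (forall psi : V -> R, linear_functional psi -> (forall x, `|psi x| <= 2 * `|x|) ->
     exists M : R, forall s, S s -> `|psi s| <= M) ->
  exists K : R, forall s, S s -> `|s| <= K.
Proof.
move=> weakly; apply: contrapT => unbounded.
have large (n : nat) : exists s, S s /\ 2 * n%:R / hump_weight R n < `|s|.
  apply: contrapT => hn; apply: unbounded; exists (2 * n%:R / hump_weight R n) => s Ss.
  by rewrite leNgt; apply/negP => lt; apply: hn; exists s.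
have [s sP] := choice large.
have [ps psP] := choice (fun n => norming_functional (s n)).
have ps_lin n : linear_functional (ps n) by case: (psP n).
have ps_bd n x : `|ps n x| <= `|x| by case: (psP n).
have ps_norm n : ps n (s n) = `|s n| by case: (psP n).
have [psi [psi_lin psi_bd psi_approx]] := hump_limit_functional s ps_lin ps_bd.
have [M hM] := weakly psi psi_lin psi_bd.
set m := (Num.trunc M).+1; have Mm : M < m%:R := truncnS_gt _.
have [Ssm sm] := sP m; have hpsi := hM _ Ssm.
have wm := hump_weight_gt0 R m.
have h1 : 2 * m%:R < hump_weight R m * `|s m|.
  by move: sm; rewrite ltr_pdivrMr //; lra.
have h2 : hump_weight R m * `|s m| <= `|psi (s m)| + `|psi (s m) - hump s ps m.+1 (s m)|.
  apply: le_trans (hump_at_large (ps_norm m)) _.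
  by have := ler_normB (psi (s m)) (psi (s m) - hump s ps m.+1 (s m)); rewrite opprB addrC subrK.
have := psi_approx m.+1 (s m); rewrite hump_weightS.
have -> : 3 / 2 * (hump_weight R m / 3) * `|s m| = hump_weight R m * `|s m| / 2 by field.
by move: h1 h2 hpsi Mm; lra.
Qed.

Section Complexification.
Variables (R : realType) (V : completeNormedModType R) (L : banach_lattice V).
Local Notation le := (bl_le L).
Local Notation E := (cE V).

Lemma cscale_realE (a : R) (z : E) : cscale (a, 0) z = (a *: z.1, a *: z.2).
Proof. by rewrite /cscale /= !scale0r subr0 add0r. Qed.

Lemma cscale0 (z : E) : cscale (0, 0) z = (0, 0).
Proof. by rewrite cscale_realE !scale0r. Qed.

Lemma csubE (z w : E) : csub z w = cadd z (cscale (-1, 0) w).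
Proof. by rewrite cscale_realE !scaleN1r. Qed.

Lemma clinear_csub (B : E -> E) z w : clinear_on setT B -> B (csub z w) = csub (B z) (B w).
Proof. by case=> BD BZ; rewrite !csubE BD // BZ. Qed.

Lemma continuous_re_real (B : E -> E) : continuous B -> continuous (fun x : V => (B (x, 0)).1).
Proof.
move=> cB x; have emb : {for x, continuous (fun y : V => (y, 0 : V))}.
  by apply: cvg_pair; [apply: cvg_id | apply: cvg_cst].
by apply: continuous_comp; [apply: continuous_comp emb (cB _) | apply: cvg_fst].
Qed.

Lemma cmod_le_real x : le 0 x -> cmod_le L (x, 0) x.
Proof.
move=> x0 th /=; rewrite scaler0 addr0.
by have := bl_scaler_wle x0 (cos_le1 th); rewrite scale1r.
Qed.

Lemma linear_functional_continuous (psi : V -> R) (C : R) :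
  linear_functional psi -> (forall x, `|psi x| <= C * `|x|) -> continuous psi.
Proof.
move=> plin pb x; have C1 : 0 < `|C| + 1 by rewrite ltr_wpDl.
apply/cvgrPdist_lt => e e0; near=> y.
rewrite -linear_functionalB //; apply: le_lt_trans (pb _) _.
apply: le_lt_trans (_ : _ <= (`|C| + 1) * `|x - y|) _.
  by apply: ler_wpM2r => //; apply: le_trans (ler_norm C) _; rewrite lerDl.
rewrite mulrC -ltr_pdivlMr //; near: y; apply: cvgr_dist_lt => //.
by rewrite divr_gt0.
Unshelve. all: by end_near.
Qed.

Lemma dual_elt_functional (psi : V -> R) (C : R) (T : E -> E) :
  linear_functional psi -> (forall x, `|psi x| <= C * `|x|) ->
  continuous T -> clinear_on setT T ->
  dual_elt (fun z => (psi (T z).1, psi (T z).2)).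
Proof.
move=> plin pb cT [TD TZ]; have [pD pZ] := plin.
have pc := linear_functional_continuous plin pb.
have cpsi (f : E -> V) : continuous f -> continuous (psi \o f).
  by move=> cf z; apply: continuous_comp; [apply: cf | apply: pc].
have c1 : continuous (psi \o (fst \o T)).
  by apply: cpsi => w; apply: continuous_comp; [apply: cT | apply: cvg_fst].
have c2 : continuous (psi \o (snd \o T)).
  by apply: cpsi => w; apply: continuous_comp; [apply: cT | apply: cvg_snd].
split; last split.
- by move=> z; apply: cvg_pair (c1 z) (c2 z).
- by move=> z w; rewrite TD // /cadd /= !pD.
- move=> a z; rewrite TZ // /cscale /cmul /= !linear_functionalB // !pD !pZ.
  by rewrite [a.2 * _ + _]addrC.
Qed.

Lemma dual_elt_comb (f g : E -> R * R) (k : R) : dual_elt f -> dual_elt g ->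
  dual_elt (fun z => (k * (f z).1 - (g z).1, k * (f z).2 - (g z).2)).
Proof.
move=> [cf [fD fZ]] [cg [gD gZ]].
have cproj (h : E -> R * R) (p : R * R -> R) : continuous h -> continuous p ->
    continuous (p \o h) by move=> ch cp z; apply: continuous_comp; [apply: ch | apply: cp].
have comb (p : R * R -> R) : continuous p -> continuous (fun z => k * p (f z) - p (g z)).
  move=> cp z; apply: cvgB; last exact: cproj.
  by apply: cvgM; [apply: cvg_cst | apply: cproj].
have cont1 : continuous (fun z => k * (f z).1 - (g z).1) by apply: comb => w; apply: cvg_fst.
have cont2 : continuous (fun z => k * (f z).2 - (g z).2) by apply: comb => w; apply: cvg_snd.
split; first by move=> z; apply: cvg_pair (cont1 z) (cont2 z).
split=> [z w|a z]; [rewrite fD gD | rewrite fZ gZ /cmul].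
  by apply: injective_projections => /=; ring.
by apply: injective_projections => /=; ring.
Qed.

Lemma ideal_E_order_bounded u z : ideal_E L u z -> exists c : R, order_bounded L u c z.1.
Proof.
case=> c [_ hc]; exists c; split; last by have := hc 0; rewrite cos0 sin0 scale0r addr0 scale1r.
by have := hc pi; rewrite cospi sinpi scale0r addr0 scaleN1r => /bl_leN2; rewrite opprK.
Qed.
End Complexification.

Lemma norm_le_sqrD (R : realType) (a b d : R) : 0 <= d -> a ^+ 2 + b ^+ 2 <= d ^+ 2 -> `|a| <= d.
Proof.
move=> d0 h; rewrite -ler_sqr ?nnegrE // real_normK ?num_real //.
by apply: le_trans h; rewrite lerDl sqr_ge0.
Qed.

Section Resolvent.
Variables (R : realType) (V : completeNormedModType R) (L : banach_lattice V).
Variables (D : set (cE V)) (A : cE V -> cE V).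
Local Notation le := (bl_le L).
Local Notation E := (cE V).

Lemma resolvent0 mu B : is_resolvent D A mu B -> B (0, 0) = (0, 0).
Proof. by case=> _ [[_ BZ] _]; have := BZ (0, 0) (0, 0) I; rewrite !cscale0. Qed.

Lemma resolventA mu B z : is_resolvent D A mu B -> D z -> B (A z) = csub (cscale mu (B z)) z.
Proof.
case=> _ [Blin [_ BAK]] Dz; have := BAK z Dz.
rewrite clinear_csub //; case: Blin => _ -> //.
case: z (cscale mu (B z)) (B (A z)) {Dz} => [z1 z2] [a1 a2] [b1 b2] [<- <-].
by rewrite /csub /= !opprB !subrKC.
Qed.

(* Write B (x, 0) = p + i q with p, q real points of D: the imaginary part of
   (mu - A) B (x, 0) = x gives (mu - A) q = 0, hence q = 0. *)
Lemma resolvent_real (mu : R) B x : csubspace D -> clinear_on D A -> real_op D A ->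
  is_resolvent D A (mu, 0) B -> (B (x, 0)).2 = 0.
Proof.
move=> [_ [_ DZ]] [AD AZ] [Deq Areal] hres; have B00 := resolvent0 hres.
case: hres => _ [_ [BK BAK]]; case: (BK (x, 0)); set w := B (x, 0) => Dw ew.
move: Dw; rewrite {1}Deq => -[p [Dp Rp] [q [Dq Rq] wpq]].
have [Ap Aq] : (A p).2 = 0 /\ (A q).2 = 0 by split; apply: Areal.
rewrite /E_real /= in Rp Rq.
have w2 : w.2 = q.1 by rewrite -wpq /= Rp Rq scale0r scale1r !add0r addr0.
have Aw : A w = cadd (A p) (cscale (0, 1) (A q)) by rewrite -wpq AD ?AZ //; apply: DZ.
have e2 : mu *: q.1 - (A q).1 = 0.
  move: (congr1 snd ew); rewrite Aw /= Ap Aq w2.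
  by rewrite !scale0r scale1r !add0r addr0.
have := BAK _ Dq; rewrite w2.
have -> : csub (cscale (mu, 0) q) (A q) = (0, 0).
  by rewrite cscale_realE /csub Rq Aq e2 scaler0 subr0.
by rewrite B00 => <-.
Qed.

Lemma resolvent_identity (mu mu0 : R) B B0 f :
  is_resolvent D A (mu, 0) B -> is_resolvent D A (mu0, 0) B0 ->
  B f = cadd (B0 f) (cscale (mu0 - mu, 0) (B (B0 f))).
Proof.
move=> [_ [[BD BZ] [_ BAK]]] [_ [_ [B0K _]]].
have [Dy ey] := B0K f; set y := B0 f in Dy ey *; rewrite -{1}ey.
have -> : csub (cscale (mu0, 0) y) (A y) =
    cadd (csub (cscale (mu, 0) y) (A y)) (cscale (mu0 - mu, 0) y).
  by rewrite !cscale_realE; apply: injective_projections => /=;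
    rewrite scalerBl addrAC subrKC.
by rewrite BD // BAK // BZ.
Qed.

Lemma resolvent_functional_dominated (mu0 : R) B0 phi psi (C : R) :
  (forall x', dual_dom D A x' -> ideal_dual L phi x') -> dual_pos L phi ->
  is_resolvent D A (mu0, 0) B0 -> linear_functional psi -> (forall x, `|psi x| <= C * `|x|) ->
  exists c : R, 0 <= c /\ forall x, le 0 x -> `|psi (B0 (x, 0)).1| <= c * (phi (x, 0)).1.
Proof.
move=> dual_ideal [_ phi_pos] hB0 plin pb; have [cB0 [B0lin _]] := hB0.
pose psiC (T : E -> E) z := (psi (T z).1, psi (T z).2).
have dB0 : dual_elt (psiC B0) := dual_elt_functional plin pb cB0 B0lin.
have did : dual_elt (psiC id).
  by apply: (dual_elt_functional (T := id) plin pb) => // z; apply: cvg_id.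
have /dual_ideal [_ [c [c0 hc]]] : dual_dom D A (psiC B0).
  split=> //; exists (fun z => (mu0 * (psiC B0 z).1 - (psiC id z).1,
                                mu0 * (psiC B0 z).2 - (psiC id z).2)).
  split=> [|z Dz]; first exact: dual_elt_comb.
  by rewrite /psiC (resolventA hB0 Dz) cscale_realE /= !linear_functionalB // !plin.2.
exists c; split=> // x x0; apply: (norm_le_sqrD (b := psi (B0 (x, 0)).2)).
  by rewrite mulr_ge0 //; case: (phi_pos (x, 0)).
exact: hc x x0 (x, 0) (cmod_le_real x0).
Qed.

Lemma resolvent_phi_bound (mu0 : R) B0 phi :
  (forall x', dual_dom D A x' -> ideal_dual L phi x') -> dual_pos L phi -> strictly_pos L phi ->
  is_resolvent D A (mu0, 0) B0 ->
  exists K : R, 0 <= K /\ forall x, le 0 x -> `|(B0 (x, 0)).1| <= K * (phi (x, 0)).1.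
Proof.
move=> dual_ideal hphi sphi hB0.
have phi_gt0 x : le 0 x -> x != 0 -> 0 < (phi (x, 0)).1.
  move=> x0 xn0; have [|_ //] := sphi (x, 0) (conj erefl x0).
  by case=> /eqP; rewrite (negbTE xn0).
pose S := [set y | exists2 x, le 0 x /\ x != 0 & y = ((phi (x, 0)).1)^-1 *: (B0 (x, 0)).1].
have [K hK] : exists K : R, forall y, S y -> `|y| <= K.
  apply: weakly_bounded_bounded => psi plin pb.
  have [c [c0 hc]] := resolvent_functional_dominated dual_ideal hphi hB0 plin pb.
  exists c => _ [x [x0 xn0] ->]; rewrite plin.2 normrM gtr0_norm ?invr_gt0 ?phi_gt0 //.
  by rewrite mulrC ler_pdivrMr ?phi_gt0 //; apply: hc.
exists `|K|; split=> // x x0; have [->|xn0] := eqVneq x 0.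
  rewrite (resolvent0 hB0) normr0 mulr_ge0 //.
  by case: hphi => _ /(_ (0, 0) (conj erefl (bl_refl L 0))) [].
have := le_trans (hK _ (ex_intro2 _ _ x (conj x0 xn0) erefl)) (ler_norm K).
by rewrite normrZ gtr0_norm ?invr_gt0 ?phi_gt0 // mulrC ler_pdivrMr ?phi_gt0.
Qed.

Lemma resolvent_order_bounded (mu : R) B u :
  D `<=` ideal_E L u -> le 0 u -> is_resolvent D A (mu, 0) B ->
  exists K : R, 0 <= K /\ forall x, order_bounded L u (K * `|x|) (B (x, 0)).1.
Proof.
move=> dom_ideal u0 hB; have [cB [[BD BZ] [BK _]]] := hB.
apply: order_bounded_linear => //.
- by move=> x y; have := BD (x, 0) (y, 0) I I; rewrite /cadd /= addr0 => ->.
- by move=> a x; have := BZ (a, 0) (x, 0) I; rewrite !cscale_realE /= scaler0 => ->.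
- exact: continuous_re_real.
- by move=> x; apply/ideal_E_order_bounded/dom_ideal; case: (BK (x, 0)).
Qed.

Lemma resolvent_diff_bound (mu mu0 : R) B B0 u phi :
  csubspace D -> clinear_on D A -> real_op D A -> le 0 u ->
  dual_pos L phi -> strictly_pos L phi -> D `<=` ideal_E L u ->
  (forall x', dual_dom D A x' -> ideal_dual L phi x') ->
  is_resolvent D A (mu, 0) B -> is_resolvent D A (mu0, 0) B0 ->
  exists K : R, 0 <= K /\ forall x, le 0 x ->
    order_bounded L u (K * (phi (x, 0)).1) ((B (x, 0)).1 - (B0 (x, 0)).1).
Proof.
move=> hD hA hR u0 hphi sphi dom_ideal dual_ideal hB hB0.
have [K1 [K10 hK1]] := resolvent_order_bounded dom_ideal u0 hB.
have [K2 [K20 hK2]] := resolvent_phi_bound dual_ideal hphi sphi hB0.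
exists (`|mu0 - mu| * (K1 * K2)); split=> [|x x0]; first by rewrite !mulr_ge0.
set y := (B0 (x, 0)).1.
have ey : B0 (x, 0) = (y, 0).
  by rewrite [LHS]surjective_pairing (resolvent_real x hD hA hR hB0).
have -> : (B (x, 0)).1 - y = (mu0 - mu) *: (B (y, 0)).1.
  by rewrite (resolvent_identity _ hB hB0) ey cscale_realE /= addrC addKr.
apply: order_bounded_widen u0 _ (order_boundedZ (mu0 - mu) (hK1 y)).
by rewrite -!mulrA; apply: ler_wpM2l => //; apply: ler_wpM2l => //; apply: hK2.
Qed.
End Resolvent.

Section TensorComparison.
Variables (R : realType) (V : completeNormedModType R) (L : banach_lattice V).
Variables (u : V) (phi : cE V -> R * R) (T : cE V -> cE V).
Local Notation le := (bl_le L).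
Hypothesis T_real : forall x, (T (x, 0)).2 = 0.
Hypothesis phi_real : forall x, le 0 x -> (phi (x, 0)).2 = 0.

Lemma phi_realE x : le 0 x -> phi (x, 0) = ((phi (x, 0)).1, 0).
Proof. by move=> x0; rewrite [LHS]surjective_pairing phi_real. Qed.

Lemma succeq_neg_tensorP : op_succeq L T (neg_op (tensor u phi)) <->
  exists c : R, 0 < c /\ forall x, le 0 x -> le (- ((c * (phi (x, 0)).1) *: u)) (T (x, 0)).1.
Proof.
have E c x : le 0 x -> csub (T (x, 0)) (cscale (c, 0) (neg_op (tensor u phi) (x, 0))) =
    ((T (x, 0)).1 + (c * (phi (x, 0)).1) *: u, 0).
  move=> x0; rewrite /neg_op /tensor phi_realE // !cscale_realE /=.
  apply: injective_projections => /=; last by rewrite T_real !scaler0 subr0.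
  by rewrite scaleN1r scalerN opprK scalerA.
split=> -[c [c0 hc]]; exists c; split=> //.
  by move=> x x0; have := hc (x, 0) (conj erefl x0); rewrite E // => -[_ /bl_addr_ge0].
by move=> [x y] [/= -> x0]; rewrite E //; split=> //; apply/bl_addr_ge0/hc.
Qed.

Lemma tensor_succeqP : op_succeq L (tensor u phi) T <->
  exists c : R, 0 < c /\ forall x, le 0 x -> le (T (x, 0)).1 ((c * (phi (x, 0)).1) *: u).
Proof.
have E c x : le 0 x -> csub (tensor u phi (x, 0)) (cscale (c, 0) (T (x, 0))) =
    ((phi (x, 0)).1 *: u - c *: (T (x, 0)).1, 0).
  move=> x0; rewrite /tensor phi_realE // !cscale_realE /=.
  by apply: injective_projections => /=; rewrite ?T_real ?scaler0 ?subr0.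
split=> -[c [c0 hc]]; exists c^-1; split; rewrite ?invr_gt0 //.
  move=> x x0; have := hc (x, 0) (conj erefl x0); rewrite E // => -[_ /bl_subr_ge0].
  by move/(bl_scale_leP _ _ _ c0); rewrite scalerA.
move=> [x y] [/= -> x0]; rewrite E //; split=> //.
have ci : 0 < c^-1 by rewrite invr_gt0.
apply/bl_subr_ge0/(bl_scale_leP _ _ _ ci).
by rewrite invrK scalerA; apply: hc.
Qed.
End TensorComparison.

Unset Implicit Arguments.
Set Strict Implicit.

Theorem proposition4p7 (R : realType) (V : completeNormedModType R)
  (L : banach_lattice V) (D : set (cE V)) (A : cE V -> cE V)
  (u : V) (phi : cE V -> R * R) (mu0 : R) :
  csubspace D -> clinear_on D A ->
  densely_defined D -> closed_op D A -> real_op D A ->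
  bl_le L 0 u ->
  dual_pos L phi -> strictly_pos L phi ->
  D `<=` ideal_E L u ->
  (forall x', dual_dom D A x' -> ideal_dual L phi x') ->
  in_resolvent_set D A (mu0, 0) ->
  (forall B0, is_resolvent D A (mu0, 0) B0 ->
     (op_succeq L B0 (neg_op (tensor u phi)) <->
      (forall (mu : R) B, is_resolvent D A (mu, 0) B ->
         op_succeq L B (neg_op (tensor u phi))))) /\
  (forall B0, is_resolvent D A (mu0, 0) B0 ->
     (op_succeq L (tensor u phi) B0 <->
      (forall (mu : R) B, is_resolvent D A (mu, 0) B ->
         op_succeq L (tensor u phi) B))).
Proof.
move=> hD hA _ _ hR u0 hphi sphi dom_ideal dual_ideal _.
have phi_real x : bl_le L 0 x -> (phi (x, 0)).2 = 0.
  by move=> x0; case: (hphi.2 (x, 0) (conj erefl x0)).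
have B_real mu B : is_resolvent D A (mu, 0) B -> forall x, (B (x, 0)).2 = 0.
  by move=> hB x; apply: resolvent_real hD hA hR hB.
have diff := resolvent_diff_bound hD hA hR u0 hphi sphi dom_ideal dual_ideal.
split=> B0 hB0; (split; last by move=> H; apply: H hB0); move=> + mu B hB.
- move=> /(succeq_neg_tensorP u (B_real _ _ hB0) phi_real) [c [c0 hc]].
  apply/(succeq_neg_tensorP u (B_real _ _ hB) phi_real).
  have [K [K0 hK]] := diff _ _ _ _ hB hB0.
  exists (c + K); split=> [|x x0]; first exact: ltr_wpDr.
  by rewrite mulrDl; apply: order_bounded_lower (hc x x0) (hK x x0).
- move=> /(tensor_succeqP u (B_real _ _ hB0) phi_real) [c [c0 hc]].
  apply/(tensor_succeqP u (B_real _ _ hB) phi_real).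
  have [K [K0 hK]] := diff _ _ _ _ hB hB0.
  exists (c + K); split=> [|x x0]; first exact: ltr_wpDr.
  by rewrite mulrDl; apply: order_bounded_upper (hc x x0) (hK x x0).
Qed.
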